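(* Assume $\Delta^2=0$, constant budget $\Lambda(t)=\Lambda$, $\pi_0<1$ with $\pi_0\ge(1-\pi_0)/|G|$, and hypothesis (U). Then as $t\to\infty$ the expected per-stage cost of the semi-omniscient policy satisfies $$\mathbb E[M_t(\lambda^s)]\ge\frac{p_0Q(p_0Q+1-p_0)}{\pi_0\Lambda t}+O\!\left(\frac1{t^2}\right).$$
   Context: Model. There are $Q$ cells. At time $1$ each cell independently contains a target with probability $p_0\in(0,1)$; $\Psi(t)$ is the set of target locations at time $t$, the number of targets $|\Psi(1)|\sim\mathrm{Binomial}(Q,p_0)$ is constant in time, and at most one target occupies a cell. Each cell $j$ has a set $G(j)$ of neighbours with $|G(j)|=|G|$; $H(j)=\{j\}\cup G(j)$, $G(S)=\bigcup_{j\in S}G(j)$, $H(S)=S\cup G(S)$; neighbourhoods of distinct targets are disjoint. Between stages each target independently stays with probability $\pi_0$, otherwise moves to a uniformly chosen neighbour. Amplitudes: initial $\mathcal N(\mu_0,\sigma_0^2)$, random walk with $\mathcal N(0,\Delta^2)$ increments. Observations $y_i(t)=\sqrt{\lambda_i(t)}I_i(t)\theta_i(t)+n_i(t)$, $n_i(t)$ i.i.d. $\mathcal N(0,\sigma^2)$, efforts $\lambda_i(t)\ge0$, $\sum_i\lambda_i(t)\le\Lambda(t)$. Posterior precisions start at $c_i(1)=\sigma^2/\sigma_0^2$ and evolve by: for each target $n$ at $s^{(n)}(t)$ and each $i\in H(s^{(n)}(t))$, $1/c_i(t+1)=1/(c_{s^{(n)}(t)}(t)+\lambda_{s^{(n)}(t)}(t))+\Delta^2/\sigma^2$.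 The expected per-stage cost of a policy is $\mathbb E[M_t(\lambda)]=\mathbb E\big[\sum_{i\in\Psi(t)}1/(c_i(t)+\lambda_i(t))\big]$. Semi-omniscient policy: at stage $t$ it knows $\Psi(t-1)$, so $p_i(t)=\pi_0$ on $\Psi(t-1)$, $(1-\pi_0)/|G|$ on $G(\Psi(t-1))$, $0$ elsewhere, and allocates $\lambda^s(t)$ minimizing $\sum_ip_i(t)/(c_i(t)+\lambda_i)$ over $\lambda\ge0$, $\sum_i\lambda_i=\Lambda(t)$. Hypothesis (U): for every $t>1$, $c_i(t)=\bar c(t)$ for all $i\in H(\Psi(t-1))$, where $\bar c$ is the sequence with $\bar c(1)=\sigma^2/\sigma_0^2$ and $\bar c(t+1)=\frac{\pi_0^{3/2}+|G|^{-1/2}(1-\pi_0)^{3/2}}{\sqrt{\pi_0}+\sqrt{|G|(1-\pi_0)}}\big((1+|G|)\bar c(t)+\Lambda/|\Psi(1)|\big)$ if $\bar c(t)<c_{\mathrm{crit}}$ and $\bar c(t+1)=\bar c(t)+\pi_0\Lambda/|\Psi(1)|$ otherwise, with $c_{\mathrm{crit}}=\Lambda/(|\Psi(1)|e(\pi_0,G))$, $e(\pi_0,G)=\sqrt{|G|\pi_0/(1-\pi_0)}-1$. *)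

From HB Require Import structures.
From mathcomp Require Import all_boot all_order all_algebra.
Set Implicit Arguments. Unset Strict Implicit. Unset Printing Implicit Defensive.
Import Order.TTheory GRing.Theory Num.Theory.
Local Open Scope ring_scope.

Section Model.
Variables (R : archiRcfType) (T : finType).

Definition Hn (G : T -> {set T}) (j : T) : {set T} := j |: G j.
Definition GS (G : T -> {set T}) (S : {set T}) : {set T} := \bigcup_(j in S) G j.

Definition disjoint_nbhd (G : T -> {set T}) (S : {set T}) : Prop :=
  forall j k, j \in S -> k \in S -> j != k -> [disjoint Hn G j & Hn G k].

(* semi-omniscient prediction p_i(t) given Psi(t-1) = S, with g = |G| *)
Definition p_semi (G : T -> {set T}) (g : nat) (pi0 : R) (S : {set T}) (i : T) : R :=
  if i \in S then pi0 else if i \in GS G S then (1 - pi0) / g%:R else 0.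

Definition feasible (Lam : R) (lam : T -> R) : Prop :=
  (forall i, 0 <= lam i) /\ \sum_(i : T) lam i = Lam.

Definition semi_obj (p c lam : T -> R) : R := \sum_(i : T) p i / (c i + lam i).

Definition is_minimizer (Lam : R) (p c lam : T -> R) : Prop :=
  feasible Lam lam /\ forall lam', feasible Lam lam' -> semi_obj p c lam <= semi_obj p c lam'.

(* the mean-field precision sequence cbar of hypothesis (U), for N = |Psi(1)| targets *)
Definition ratio_coef (g : nat) (pi0 : R) : R :=
  (pi0 * Num.sqrt pi0 + (1 - pi0) * Num.sqrt (1 - pi0) / Num.sqrt g%:R)
  / (Num.sqrt pi0 + Num.sqrt (g%:R * (1 - pi0))).

Definition e_coef (g : nat) (pi0 : R) : R := Num.sqrt (g%:R * pi0 / (1 - pi0)) - 1.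

Definition c_crit (g : nat) (pi0 Lam : R) (N : nat) : R := Lam / (N%:R * e_coef g pi0).

Definition cbar_step (g : nat) (pi0 Lam : R) (N : nat) (c : R) : R :=
  if c < c_crit g pi0 Lam N then ratio_coef g pi0 * ((1 + g%:R) * c + Lam / N%:R)
  else c + pi0 * Lam / N%:R.

(* cbar_aux n = cbar(n+1) *)
Fixpoint cbar_aux (g : nat) (pi0 Lam sigma2 sigma02 : R) (N : nat) (n : nat) : R :=
  if n is m.+1 then cbar_step g pi0 Lam N (cbar_aux g pi0 Lam sigma2 sigma02 N m)
  else sigma2 / sigma02.

Definition cbar g pi0 Lam sigma2 sigma02 N (t : nat) : R :=
  cbar_aux g pi0 Lam sigma2 sigma02 N t.-1.

(* movement of the targets between stages t-1 and t: each target s in S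
   goes to f s, with f s = s (prob. pi0) or f s in G(s) (prob. (1-pi0)/|G|) *)
Definition move_ok (G : T -> {set T}) (S : {set T}) (f : {ffun T -> T}) : bool :=
  [forall x, if x \in S then f x \in Hn G x else f x == x].

Definition move_prob (g : nat) (pi0 : R) (S : {set T}) (f : {ffun T -> T}) : R :=
  \prod_(s in S) (if f s == s then pi0 else (1 - pi0) / g%:R).

(* Expected per-stage cost E[M_t(lambda^s)] at stage t, when Psi(t-1) has law mu,
   the precisions on H(Psi(t-1)) are cbar(t) (hypothesis (U)), the efforts are
   lam (S = Psi(t-1)), and Psi(t) = f @: Psi(t-1). *)
Definition exp_cost (G : T -> {set T}) (g : nat) (pi0 Lam sigma2 sigma02 : R)
    (mu : {set T} -> R) (lam : {set T} -> T -> R) (t : nat) : R :=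
  \sum_(S : {set T}) mu S *
    \sum_(f : {ffun T -> T} | move_ok G S f) move_prob g pi0 S f *
      \sum_(i in f @: S) 1 / (cbar g pi0 Lam sigma2 sigma02 #|S| t + lam S i).

Definition ge_plus_O_inv_sq (u : nat -> R) (a : R) : Prop :=
  exists C : R, exists t0 : nat, forall t : nat, (t0 <= t)%N ->
    a / t%:R - C / (t%:R ^+ 2) <= u t.

End Model.

(* Given N = |Psi(t-1)| targets, disjointness of their neighbourhoods makes the N
   targets land in N distinct cells, each of which receives effort at most Lambda;
   so the stage cost is at least N / (cbar(t) + Lambda), whatever allocation is
   used (only feasibility of the semi-omniscient one matters).  The precision
   cbar grows at most linearly, cbar(t) <= K_N + t pi0 Lambda / N, which gives
   N / (cbar(t) + Lambda) >= N^2 / (pi0 Lambda t) - O(1/t^2).  Averaging over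
   N ~ Binomial(Q, p0), whose second moment is p0 Q (p0 Q + 1 - p0), concludes. *)
From HB Require Import structures.
From mathcomp Require Import all_boot all_order all_algebra.
From mathcomp Require Import ring lra.
Set Implicit Arguments. Unset Strict Implicit. Unset Printing Implicit Defensive.
Import Order.TTheory GRing.Theory Num.Theory.

Local Open Scope ring_scope.

Section BinomialMoments.
Variable R : comNzRingType.

Definition binom_pmf (p : R) (n N : nat) : R :=
  'C(n, N)%:R * p ^+ N * (1 - p) ^+ (n - N).

Lemma sum_binom_pmf (p : R) n : \sum_(N < n.+1) binom_pmf p n N = 1.
Proof.
have := exprDn (1 - p) p n; rewrite subrK expr1n => ->.
by apply: eq_bigr => i _; rewrite /binom_pmf -mulr_natl; ring.
Qed.

Lemma sum_binom_pmf_mulnr (p : R) n (F : nat -> R) :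
  \sum_(N < n.+2) binom_pmf p n.+1 N * (N%:R * F N) =
  n.+1%:R * p * \sum_(k < n.+1) binom_pmf p n k * F k.+1.
Proof.
rewrite big_ord_recl /= mul0r mulr0 add0r mulr_sumr.
apply: eq_bigr => i _; rewrite /binom_pmf /bump /= subSS add1n exprS.
have E : i.+1%:R * 'C(n.+1, i.+1)%:R = n.+1%:R * 'C(n, i)%:R :> R.
  by rewrite -!natrM -mul_bin_diag.
transitivity (i.+1%:R * 'C(n.+1, i.+1)%:R * p * p ^+ i * (1 - p) ^+ (n - i) * F i.+1).
  by ring.
by rewrite E; ring.
Qed.

Lemma binom_mean (p : R) n : \sum_(N < n.+1) binom_pmf p n N * N%:R = n%:R * p.
Proof.
case: n => [|n]; first by rewrite big_ord1 mulr0 mul0r.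
transitivity (\sum_(N < n.+2) binom_pmf p n.+1 N * (N%:R * 1)).
  by apply: eq_bigr => i _; rewrite mulr1.
rewrite (sum_binom_pmf_mulnr p n (fun=> 1)).
by under eq_bigr do rewrite mulr1; rewrite sum_binom_pmf mulr1.
Qed.

Lemma binom_second_moment (p : R) n :
  \sum_(N < n.+1) binom_pmf p n N * N%:R ^+ 2 = n%:R * p * (n%:R * p + 1 - p).
Proof.
case: n => [|n]; first by rewrite big_ord1 /= expr0n !mul0r mulr0.
under eq_bigr do rewrite expr2.
rewrite (sum_binom_pmf_mulnr p n (fun N => N%:R)).
under eq_bigr do rewrite -natr1 mulrDr mulr1.
by rewrite big_split /= binom_mean sum_binom_pmf -natr1; ring.
Qed.

Lemma sum_binom_pmf_widen (p : R) n M (F : nat -> R) : (n <= M)%N ->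
  \sum_(N < M.+1) binom_pmf p n N * F N = \sum_(N < n.+1) binom_pmf p n N * F N.
Proof.
move=> leMn; rewrite [RHS](big_ord_widen M.+1 (fun N => binom_pmf p n N * F N)) //.
rewrite [RHS]big_mkcond; apply: eq_bigr => i _.
by case: ltnP => // ltni; rewrite /binom_pmf bin_small ?mul0r.
Qed.

End BinomialMoments.

Lemma binom_pmf_ge0 (R : realDomainType) (p : R) n N :
  0 <= p <= 1 -> 0 <= binom_pmf p n N.
Proof.
by case/andP=> p_ge0 p_le1; rewrite !mulr_ge0 ?exprn_ge0 ?subr_ge0.
Qed.

Section TargetMoves.
Variables (R : archiRcfType) (T : finType) (G : T -> {set T}) (g : nat) (pi0 : R).

Lemma sum_move_prob (S : {set T}) :
  (0 < g)%N -> (forall j, #|G j| = g) -> (forall j, j \notin G j) ->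
  \sum_(f : {ffun T -> T} | move_ok G S f) move_prob g pi0 S f = 1.
Proof.
move=> g_gt0 card_G G_irr.
pose dest i := [pred j : T | if i \in S then j \in Hn G i else j == i].
pose w i j : R := if i \in S then (if j == i then pi0 else (1 - pi0) / g%:R) else 1.
transitivity (\sum_(f in family dest) \prod_i w i (f i)).
  apply: eq_big => f.
    by apply/forallP/familyP => H x; [rewrite inE; exact: H | move: (H x); rewrite inE].
  by move=> _; rewrite /move_prob big_mkcond; apply: eq_bigr => i _; rewrite /w; case: ifP.
rewrite -bigA_distr_big_dep; apply: big1 => i _; rewrite /w /dest.
case: (boolP (i \in S)) => iS /=; last by rewrite (big_pred1 i) // => j; rewrite !inE.
rewrite (bigD1 i) /= ?eqxx; last by rewrite /Hn setU11.
have -> : \sum_(j | (j \in Hn G i) && (j != i)) (if j == i then pi0 else (1 - pi0) / g%:R)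
          = \sum_(j in G i) (1 - pi0) / g%:R.
  apply: eq_big => [j|j /andP[_ /negbTE ->] //].
  rewrite /Hn in_setU1; case: eqP => [->|_]; last by rewrite andbT.
  by rewrite (negbTE (G_irr i)).
rewrite sumr_const card_G -[_ *+ g]mulr_natr divfK; last by rewrite pnatr_eq0 -lt0n.
by rewrite addrC subrK.
Qed.

Lemma move_prob_ge0 (S : {set T}) (f : {ffun T -> T}) :
  0 <= pi0 <= 1 -> 0 <= move_prob g pi0 S f.
Proof.
case/andP=> pi0_ge0 pi0_le1; apply: prodr_ge0 => s _.
by case: ifP => _ //; rewrite divr_ge0 ?subr_ge0.
Qed.

Lemma move_ok_inj (S : {set T}) (f : {ffun T -> T}) :
  disjoint_nbhd G S -> move_ok G S f -> {in S &, injective f}.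
Proof.
move=> disjS /forallP okf x y xS yS fxy; apply/eqP/negPn/negP => neq_xy.
have := okf x; have := okf y; rewrite xS yS -fxy => fy_in fx_in.
by move: fy_in; rewrite (disjointFr (disjS x y xS yS neq_xy) fx_in).
Qed.

Lemma stage_cost_ge (Lam c : R) (S : {set T}) (f : {ffun T -> T}) (lam : T -> R) :
  disjoint_nbhd G S -> move_ok G S f -> feasible Lam lam -> 0 < c ->
  #|S|%:R / (c + Lam) <= \sum_(i in f @: S) 1 / (c + lam i).
Proof.
move=> disjS okf [lam_ge0 sum_lam] c_gt0.
rewrite -(card_in_imset (move_ok_inj disjS okf)).
have -> : #|f @: S|%:R / (c + Lam) = \sum_(i in f @: S) 1 / (c + Lam).
  by rewrite sumr_const div1r mulr_natl.
have lam_le : forall i, lam i <= Lam.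
  by move=> i; rewrite -sum_lam (bigD1 i) //= lerDl sumr_ge0.
apply: ler_sum => i _; rewrite !div1r lef_pV2 ?posrE ?lerD2l //.
- by rewrite ltr_wpDr // (le_trans (lam_ge0 i)).
- exact: ltr_wpDr.
Qed.

End TargetMoves.

Section MeanFieldPrecision.
Variables (R : archiRcfType) (g : nat) (pi0 Lam sigma2 sigma02 : R) (N : nat).

Lemma ratio_coef_gt0 : 0 < pi0 -> pi0 <= 1 -> 0 < ratio_coef g pi0.
Proof.
move=> pi0_gt0 pi0_le1; rewrite /ratio_coef divr_gt0 //.
  by rewrite ltr_pwDl ?mulr_gt0 ?sqrtr_gt0 // divr_ge0 ?mulr_ge0 ?subr_ge0 ?sqrtr_ge0.
by rewrite ltr_pwDl ?sqrtr_gt0 ?sqrtr_ge0.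
Qed.

Definition cbar_offset : R :=
  Num.max (sigma2 / sigma02)
    (ratio_coef g pi0 * ((1 + g%:R) * c_crit g pi0 Lam N + Lam / N%:R)).

Hypotheses (pi0_gt0 : 0 < pi0) (pi0_le1 : pi0 <= 1) (Lam_ge0 : 0 <= Lam)
  (init_gt0 : 0 < sigma2 / sigma02).

Lemma cbar_aux_gt0 n : 0 < cbar_aux g pi0 Lam sigma2 sigma02 N n.
Proof.
have ratio_gt0 := ratio_coef_gt0 pi0_gt0 pi0_le1.
elim: n => [|n IHn] //=; rewrite /cbar_step; case: ifP => _.
  rewrite mulr_gt0 //; apply: ltr_wpDr; first by rewrite divr_ge0.
  by rewrite mulr_gt0 // ltr_wpDr.
by apply: ltr_wpDr => //; rewrite !divr_ge0 ?mulr_ge0 // ltW.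
Qed.

(* Below [c_crit] a step lands under the second argument of the max; above it,
   a step adds exactly [pi0 Lam / N]. *)
Lemma cbar_aux_le n :
  cbar_aux g pi0 Lam sigma2 sigma02 N n <= cbar_offset + n%:R * (pi0 * Lam / N%:R).
Proof.
have ratio_ge0 := ltW (ratio_coef_gt0 pi0_gt0 pi0_le1).
have incr_ge0 : 0 <= pi0 * Lam / N%:R by rewrite !divr_ge0 ?mulr_ge0 // ltW.
elim: n => [|n IHn] /=; first by rewrite mul0r addr0 le_max lexx.
rewrite /cbar_step; case: ifP => below_crit.
  apply: (le_trans (y := cbar_offset)); last by rewrite lerDl mulr_ge0.
  rewrite le_max; apply/orP; right.
  by rewrite ler_wpM2l // lerD2r ler_wpM2l ?ltW // addrC natr1 ltr0Sn.
by rewrite -natr1 mulrDl mul1r addrA lerD2r.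
Qed.

End MeanFieldPrecision.

Lemma first_order_le_div_affine (R : realFieldType) (A K n x : R) :
  0 < A -> 0 < K -> 0 < n -> 0 < x ->
  n ^+ 2 / (A * x) - n ^+ 3 * K / (A ^+ 2 * x ^+ 2) <= n / (K + x * (A / n)).
Proof.
move=> A_gt0 K_gt0 n_gt0 x_gt0.
have den_gt0 : 0 < n * K + A * x by rewrite addr_gt0 // mulr_gt0.
have -> : n / (K + x * (A / n)) = n ^+ 2 / (n * K + A * x).
  by field; rewrite ?gt_eqF.
have -> : n ^+ 2 / (A * x) - n ^+ 3 * K / (A ^+ 2 * x ^+ 2) =
          n ^+ 2 * (A * x - n * K) / (A ^+ 2 * x ^+ 2).
  by field; rewrite ?gt_eqF.
rewrite ler_pdivrMr ?mulr_gt0 ?exprn_gt0 // [X in _ <= X]mulrAC ler_pdivlMr //.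
have := sqr_ge0 (n ^+ 2 * K); nra.
Qed.

Lemma sum_set_by_card (R : pzSemiRingType) (T : finType) (w : {set T} -> R)
    (h : nat -> R) M : (#|T| <= M)%N ->
  \sum_(S : {set T}) w S * h #|S| =
  \sum_(N < M.+1) (\sum_(S : {set T} | #|S| == N) w S) * h N.
Proof.
move=> leTM; under [RHS]eq_bigr do rewrite mulr_suml.
rewrite (exchange_big_dep xpredT) //=; apply: eq_bigr => S _.
have ltSM : (#|S| < M.+1)%N by rewrite ltnS (leq_trans (max_card S)).
by rewrite (big_pred1 (Ordinal ltSM)) // => N; rewrite /= -val_eqE /= eq_sym.
Qed.

Section ExpectedCost.
Variables (R : archiRcfType) (T : finType) (G : T -> {set T}) (g : nat).
Variables (pi0 Lam sigma2 sigma02 : R).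
Hypotheses (g_gt0 : (0 < g)%N) (card_G : forall j, #|G j| = g)
  (G_irr : forall j, j \notin G j).
Hypotheses (pi0_gt0 : 0 < pi0) (pi0_le1 : pi0 <= 1) (Lam_gt0 : 0 < Lam)
  (init_gt0 : 0 < sigma2 / sigma02).

Let cb N t := cbar g pi0 Lam sigma2 sigma02 N t.
Let K N := cbar_offset g pi0 Lam sigma2 sigma02 N + Lam.

Lemma exp_cost_ge_count (mu : {set T} -> R) (lam : {set T} -> T -> R) t :
  (forall S, 0 <= mu S) -> (forall S, mu S != 0 -> disjoint_nbhd G S) ->
  (forall S, feasible Lam (lam S)) ->
  \sum_(S : {set T}) mu S * (#|S|%:R / (cb #|S| t + Lam))
    <= exp_cost G g pi0 Lam sigma2 sigma02 mu lam t.
Proof.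
move=> mu_ge0 mu_supp lam_feas; apply: ler_sum => S _.
have [->|mu_neq0] := eqVneq (mu S) 0; first by rewrite !mul0r.
rewrite ler_wpM2l // -[X in X <= _]mul1r.
rewrite -{1}(sum_move_prob pi0 S g_gt0 card_G G_irr) mulr_suml.
apply: ler_sum => f okf; rewrite ler_wpM2l ?move_prob_ge0 ?(ltW pi0_gt0) //.
apply: stage_cost_ge okf _ _; [exact: mu_supp | exact: lam_feas |].
exact: (cbar_aux_gt0 _ _ pi0_gt0 pi0_le1 (ltW Lam_gt0) init_gt0).
Qed.

Lemma count_cost_ge (N t : nat) : (0 < t)%N ->
  N%:R ^+ 2 / (pi0 * Lam * t%:R) - N%:R ^+ 3 * K N / ((pi0 * Lam) ^+ 2 * t%:R ^+ 2)
    <= N%:R / (cb N t + Lam).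
Proof.
move=> t_gt0; case: N => [|n]; first by rewrite !expr0n /= !mul0r subrr.
have K_gt0 : 0 < K n.+1.
  by rewrite addr_gt0 // lt_max init_gt0.
apply: le_trans (first_order_le_div_affine _ K_gt0 _ _) _;
  rewrite ?mulr_gt0 ?ltr0n //.
rewrite ler_pM2l ?ltr0n // lef_pV2 ?posrE ?addr_gt0 ?mulr_gt0 ?divr_gt0 ?ltr0n //.
- rewrite /K /cb addrAC lerD2r.
  apply: le_trans (cbar_aux_le _ _ _ _ pi0_gt0 pi0_le1 (ltW Lam_gt0) _) _.
  by rewrite lerD2l ler_wpM2r ?ler_nat ?leq_pred // !divr_ge0 ?mulr_ge0 // ltW.
- by rewrite lt_max init_gt0.
- by rewrite invr_gt0 ltr0n.
- exact: (cbar_aux_gt0 _ _ pi0_gt0 pi0_le1 (ltW Lam_gt0) init_gt0).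
Qed.

End ExpectedCost.

Theorem proposition2
  (R : archiRcfType) (T : finType)
  (Q : nat) (p0 : R) (G : T -> {set T}) (g : nat)
  (pi0 Delta Lam sigma2 sigma02 : R)
  (mu : nat -> {set T} -> R) (lam : nat -> {set T} -> T -> R)
  (Hp0 : 0 < p0 < 1)
  (Hg : (0 < g)%N)
  (HG : forall j, #|G j| = g)
  (HGirr : forall j, j \notin G j)
  (Hsig : 0 < sigma2) (Hsig0 : 0 < sigma02)
  (HLam : 0 < Lam)
  (HDelta : Delta ^+ 2 = 0)
  (Hpi1 : pi0 < 1)
  (Hpi2 : (1 - pi0) / g%:R <= pi0)
  (Hmu_nonneg : forall t S, 0 <= mu t S)
  (Hmu_supp : forall t S, mu t S != 0 -> disjoint_nbhd G S)
  (Hmu_binom : forall t (N : nat),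
      \sum_(S : {set T} | #|S| == N) mu t S
        = 'C(Q, N)%:R * p0 ^+ N * (1 - p0) ^+ (Q - N))
  (Hlam : forall (t : nat) (S : {set T}), (2 <= t)%N ->
      is_minimizer Lam (p_semi G g pi0 S)
        (fun _ => cbar g pi0 Lam sigma2 sigma02 #|S| t) (lam t S)) :
  ge_plus_O_inv_sq
    (fun t => exp_cost G g pi0 Lam sigma2 sigma02 (mu t) (lam t) t)
    (p0 * Q%:R * (p0 * Q%:R + 1 - p0) / (pi0 * Lam)).
Proof.
have pi0_gt0 : 0 < pi0 by apply: lt_le_trans Hpi2; rewrite divr_gt0 ?subr_gt0 ?ltr0n.
have init_gt0 : 0 < sigma2 / sigma02 by rewrite divr_gt0.
have p0_01 : 0 <= p0 <= 1 by case/andP: Hp0 => /ltW -> /ltW.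
pose K N := cbar_offset g pi0 Lam sigma2 sigma02 N + Lam.
pose M := maxn Q #|T|.
exists (\sum_(N < M.+1) binom_pmf p0 Q N * (N%:R ^+ 3 * K N / (pi0 * Lam) ^+ 2)), 2%N.
move=> t le2t; have t_gt0 : (0 < t)%N by apply: leq_trans le2t.
apply: le_trans (exp_cost_ge_count Hg HG HGirr pi0_gt0 (ltW Hpi1) HLam init_gt0
  _ (Hmu_nonneg t) (Hmu_supp t) (fun S => (Hlam t S le2t).1)).
rewrite (sum_set_by_card (mu t)
  (fun N => N%:R / (cbar g pi0 Lam sigma2 sigma02 N t + Lam)) (leq_maxr Q #|T|)).
under [X in _ <= X]eq_bigr => N _ do rewrite Hmu_binom -/(binom_pmf p0 Q N).
have t_pos : 0 < t%:R :> R by rewrite ltr0n.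
have -> : p0 * Q%:R * (p0 * Q%:R + 1 - p0) / (pi0 * Lam) / t%:R
    - (\sum_(N < M.+1) binom_pmf p0 Q N * (N%:R ^+ 3 * K N / (pi0 * Lam) ^+ 2)) / t%:R ^+ 2
  = \sum_(N < M.+1) binom_pmf p0 Q N * (N%:R ^+ 2 / (pi0 * Lam * t%:R)
      - N%:R ^+ 3 * K N / ((pi0 * Lam) ^+ 2 * t%:R ^+ 2)).
  rewrite [p0 * _]mulrC -binom_second_moment.
  rewrite -(sum_binom_pmf_widen _ (fun N => N%:R ^+ 2) (leq_maxl Q #|T|)).
  rewrite !mulr_suml -sumrB; apply: eq_bigr => N _.
  by field; rewrite ?gt_eqF ?mulr_gt0.
apply: ler_sum => N _; rewrite ler_wpM2l ?binom_pmf_ge0 //.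
exact: (count_cost_ge _ pi0_gt0 (ltW Hpi1) HLam init_gt0 N t_gt0).
Qed.
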